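(* Let bidder $i$ have a constraint-homogeneous valuation with interest set $S$ and per-unit value $\hat v$, let $s^*=\lceil |S|/2\rceil$, and let $b_i'$ be the Core Deviation of $i$. Let $b$ be any strategy profile and let $p_1\le p_2\le\dots\le p_{|S|}$ be the prices at which the items of $S$ are sold under $b$, sorted in non-decreasing order. If bidder $i$ wins fewer than $s^*$ items of $S$ in the profile $(b_i'(b_i),b_{-i})$, then $p_{s^*}\ge \hat v/2$.
   Context: Draft auction: $n$ bidders, items $[m]$; rounds are run while the set $I$ of remaining items is nonempty: each bidder submits a sealed bid $b_i\ge0$ and a set $X_i\subseteq I$; the highest bidder (ties arbitrary) gets her set (removed from $I$) and pays her bid times its size; winner, winning bid and bundle are announced. A strategy maps observed histories to actions. The price at which an item is sold is the winning bid of the round in which it is allocated. Constraint-homogeneous valuation: $v(T)=\hat v|T\cap S|$. Items of $S$ are called units. For the original strategy $b_i$ (within profile $b$), $b_{it}$ denotes $i$'s bid in auction $t$, $k_{it}$ the number of units she obtains in auction $t$, $k_{i,<t}$ the number obtained before auction $t$. Core Deviation $b_i'$: let $b_i^*=\hat v/2$. In every auction $t$ she bids $\max\{b_i^*,b_{it}\}$. If she wins with bid $b_i^*$ (i.e. $b_i^*>b_{it}$), she takes $s^*-k_{i,<t}$ units of $S$ and drops out. If she wins with bid $b_{it}$, she takes exactly what she took under $b_i$ in auction $t$. She keeps bidding this way until she has acquired $s^*$ units or the remaining units are not enough to complete $s^*$ units. *)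

From HB Require Import structures.
From mathcomp Require Import all_boot all_order all_algebra.
Set Implicit Arguments. Unset Strict Implicit. Unset Printing Implicit Defensive.
Import Order.TTheory GRing.Theory Num.Theory.
Local Open Scope ring_scope.

Section DraftAuction.
Variables (R : realFieldType) (n m : nat).

(* Public announcement of a round: (winner, winning bid, bundle). *)
Definition announcement := ('I_n * R * {set 'I_m})%type.
Definition history := seq announcement.
Definition action := (R * {set 'I_m})%type.
Definition strategy := history -> action.
Definition profile := 'I_n -> strategy.
(* Tie-breaking: a (history dependent) priority order on the bidders. *)
Definition tiebreak := history -> seq 'I_n.

Definition allocated (h : history) : {set 'I_m} := \bigcup_(a <- h) a.2.
Definition remaining (h : history) : {set 'I_m} := ~: allocated h.
Definition won (j : 'I_n) (h : history) : {set 'I_m} :=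
  \bigcup_(a <- h | a.1.1 == j) a.2.

Definition valid_strategy (s : strategy) : Prop :=
  forall h, 0 <= (s h).1 /\ (s h).2 \subset remaining h.
Definition valid_tiebreak (tb : tiebreak) : Prop :=
  forall h, perm_eq (tb h) (enum 'I_n).

Definition round_winner (tb : tiebreak) (b : profile) (h : history) : option 'I_n :=
  ohead [seq j <- tb h | [forall k, (b k h).1 <= (b j h).1]].

Definition step (tb : tiebreak) (b : profile) (h : history) : history :=
  if remaining h == set0 then h else
  match round_winner tb b h with
  | Some j => rcons h (j, (b j h).1, (b j h).2)
  | None => h
  end.

Definition run (tb : tiebreak) (b : profile) (t : nat) : history :=
  iter t (step tb b) [::].

Definition price (h : history) (x : 'I_m) : R :=
  head 0 [seq a.1.2 | a : announcement <- h & x \in a.2].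

Definition sorted_prices (h : history) (S : {set 'I_m}) : seq R :=
  sort (fun x y : R => x <= y) [seq price h x | x in S].

Definition sstar (S : {set 'I_m}) : nat := uphalf #|S|.

Definition ch_valuation (S : {set 'I_m}) (vhat : R) (T : {set 'I_m}) : R :=
  vhat * (#|T :&: S|)%:R.

Definition core_deviation (S : {set 'I_m}) (vhat : R) (bi : strategy)
    (i : 'I_n) : strategy :=
  fun h =>
    let k := #|won i h :&: S| in
    let avail := remaining h :&: S in
    if (sstar S <= k)%N || (#|avail| < sstar S - k)%N then (0, set0)
    else if vhat / 2 > (bi h).1 then
      (vhat / 2, [set x in take (sstar S - k) (enum avail)])
    else bi h.

Definition upd (b : profile) (i : 'I_n) (s : strategy) : profile :=
  fun j => if j == i then s else b j.

End DraftAuction.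

From HB Require Import structures.
From mathcomp Require Import all_boot all_order all_algebra.
Import Order.TTheory GRing.Theory Num.Theory.
Local Open Scope ring_scope.
Set Implicit Arguments. Unset Strict Implicit. Unset Printing Implicit Defensive.

(* Compare the run of the original profile b with the run of the
   deviation profile b' = (b_i', b_{-i}).  As long as the Core Deviation has not
   given up, the two runs coincide and every winning bid is at least vhat/2:
   - if b_it >= vhat/2 the deviator plays b_it, so nothing changes and the
     winning bid is at least b_it;
   - if b_it < vhat/2 the deviator bids vhat/2 for the units it still needs;
     winning would give it s* units, which is excluded by hypothesis, so some
     other bidder outbids vhat/2, and that bidder also wins under b.
   Let t0 be the first round in which the deviator gives up (or T if it never
   does before T). *)

Section Histories.
Variables (R : realFieldType) (n m : nat).
Implicit Types (h : history R n m) (a : announcement R n m).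

Lemma won_rcons j h a :
  won j (rcons h a) = won j h :|: (if a.1.1 == j then a.2 else set0).
Proof. by rewrite /won big_rcons. Qed.

Lemma won_sub_allocated j h : won j h \subset allocated h.
Proof.
rewrite /won /allocated; elim: h => [|a h IH]; first by rewrite !big_nil.
rewrite !big_cons; case: ifP => _; first exact: setUSS.
exact: subset_trans IH (subsetUr _ _).
Qed.

Lemma price_prefix h h' x :
  x \in allocated h -> exists2 a, a \in h & price (h ++ h') x = a.1.2.
Proof.
rewrite /price filter_cat map_cat /allocated.
elim: h => [|a h IH]; first by rewrite big_nil inE.
rewrite big_cons inE /=; case: ifP => [_ _|_ /IH[a' Ha' ->]].
  by exists a; rewrite ?mem_head.
by exists a'; rewrite // in_cons Ha' orbT.
Qed.

Lemma step_extends tb (p : profile R n m) h : exists h', step tb p h = h ++ h'.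
Proof.
rewrite /step; case: ifP => _; first by exists [::]; rewrite cats0.
case: round_winner => [j|]; last by exists [::]; rewrite cats0.
by eexists; rewrite -cats1.
Qed.

Lemma run_extends tb (p : profile R n m) t T : (t <= T)%N ->
  exists h', run tb p T = run tb p t ++ h'.
Proof.
move=> le_tT; rewrite -(subnKC le_tT); elim: (T - t)%N => [|d [h' IH]].
  by exists [::]; rewrite addn0 cats0.
rewrite addnS /run iterS -/(run tb p (t + d)) IH.
have [h'' ->] := step_extends tb p (run tb p t ++ h').
by exists (h' ++ h''); rewrite catA.
Qed.

End Histories.

Section Winner.
Variables (R : realFieldType) (n m : nat) (tb : tiebreak R n m).
Implicit Types (p q : profile R n m) (h : history R n m).

Definition highest p h (j : 'I_n) : bool := [forall k, (p k h).1 <= (p j h).1].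

Lemma round_winner_highest p h w : round_winner tb p h = Some w -> highest p h w.
Proof. by rewrite /round_winner; elim: (tb h) => //= x s IH; case: ifP => // Hx [<-]. Qed.

Lemma round_winner_exists p h (j0 : 'I_n) :
  valid_tiebreak tb -> exists w, round_winner tb p h = Some w.
Proof.
move=> Htb; pose w0 := [arg max_(j > j0) (p j h).1]%O.
have w0_highest : highest p h w0.
  by apply/forallP; rewrite /w0; case: arg_maxP => // j _ Hj k; apply: Hj.
have : has (highest p h) (tb h).
  by apply/hasP; exists w0; rewrite // (perm_mem (Htb h)) mem_enum.
by rewrite /round_winner has_filter; case: filter => // w s _; exists w.
Qed.

Lemma round_winner_transfer p q h w :
  round_winner tb p h = Some w -> highest q h w ->
  (forall j, highest q h j -> highest p h j) -> round_winner tb q h = Some w.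
Proof.
move=> + Hqw Hqp; rewrite /round_winner; elim: (tb h) => //= x s IH.
case: ifP => Hpx /=.
  by case=> Ex; rewrite -Ex in Hqw *; move: Hqw; rewrite /highest => ->.
by case: ifP => Hqx //; move: (Hqp x Hqx); rewrite /highest Hpx.
Qed.

Lemma step_winner p h w :
  remaining h != set0 -> round_winner tb p h = Some w ->
  step tb p h = rcons h (w, (p w h).1, (p w h).2).
Proof. by rewrite /step => /negbTE -> ->. Qed.

End Winner.

Lemma nth_sorted_values_ge (R : realFieldType) (T : finType) (f : T -> R)
    (S A : {set T}) (c : R) (k : nat) :
  A \subset S -> {in A, forall x, c <= f x} ->
  (0 < k <= #|S|)%N -> (#|S| < #|A| + k)%N ->
  c <= nth 0 (sort (fun x y : R => x <= y) [seq f x | x in S]) k.-1.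
Proof.
move=> AS HA /andP[k_gt0 k_le] HSA.
have few_low : (count (fun y : R => (y < c)%R) [seq f x | x in S] <= #|S :\: A|)%N.
  rewrite count_map -size_filter.
  have /card_uniqP <- : uniq [seq x <- enum S | (f x < c)%R].
    by rewrite filter_uniq ?enum_uniq.
  apply/subset_leq_card/subsetP => x; rewrite mem_filter mem_enum !inE => /andP[Hlt ->].
  by rewrite andbT; apply: contraTN Hlt => /HA; rewrite -leNgt.
have := few_low; rewrite cardsD (setIidPr AS) => {}few_low.
apply: nth_count_ge; first exact: sort_le_sorted.
rewrite count_sort size_sort size_map -cardE (prednK k_gt0) k_le andbT.
by rewrite -ltnS (prednK k_gt0) (leq_ltn_trans few_low) // ltn_subLR // subset_leq_card.
Qed.

Section CoreDeviation.
Variables (R : realFieldType) (n m : nat).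
Variables (tb : tiebreak R n m) (b : profile R n m) (i : 'I_n)
  (S : {set 'I_m}) (vhat : R).
Hypothesis tb_valid : valid_tiebreak tb.
Implicit Types (h : history R n m).

Definition deviation : profile R n m := upd b i (core_deviation S vhat (b i) i).

Definition units h : nat := #|won i h :&: S|.

Definition gives_up h : bool :=
  (sstar S <= units h)%N || (#|remaining h :&: S| < sstar S - units h)%N.

Definition claim h : {set 'I_m} :=
  [set x in take (sstar S - units h) (enum (remaining h :&: S))].

Definition high_prices h : bool :=
  all (fun a : announcement R n m => vhat / 2 <= a.1.2) h.

Lemma deviation_others h j : j != i -> deviation j h = b j h.
Proof. by rewrite /deviation /upd => /negbTE ->. Qed.

Lemma deviation_active h : ~~ gives_up h ->
  deviation i h = if (b i h).1 < vhat / 2 then (vhat / 2, claim h) else b i h.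
Proof.
by rewrite /deviation /upd eqxx /core_deviation -/(units h) /gives_up => /negbTE ->.
Qed.

Lemma claim_completes h : ~~ gives_up h ->
  #|(won i h :|: claim h) :&: S| = sstar S.
Proof.
rewrite /gives_up negb_or -ltnNge -leqNgt => /andP[few_units enough_left].
have claim_fresh : claim h \subset remaining h :&: S.
  by apply/subsetP => x; rewrite inE => /mem_take; rewrite mem_enum.
have card_claim : #|claim h| = (sstar S - units h)%N.
  rewrite cardsE; have /card_uniqP -> : uniq (take (sstar S - units h)
    (enum (remaining h :&: S))) by rewrite take_uniq ?enum_uniq.
  by rewrite size_takel // -cardE.
have disjoint_claim : [disjoint claim h & won i h :&: S].
  rewrite disjoints_subset; apply: subset_trans claim_fresh _.
  apply: subset_trans (subsetIl _ _) _; rewrite /remaining setCS.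
  exact: subset_trans (subsetIl _ _) (won_sub_allocated i h).
rewrite setIUl (setIidPl (subset_trans claim_fresh (subsetIr _ _))).
rewrite cardsU [_ :&: claim h]setIC (disjoint_setI0 disjoint_claim) cards0 subn0.
by rewrite card_claim subnKC // ltnW.
Qed.

Lemma faithful_winner h w :
  ~~ gives_up h -> round_winner tb deviation h = Some w ->
  (w != i) || (vhat / 2 <= (b i h).1) ->
  [/\ round_winner tb b h = Some w, deviation w h = b w h & vhat / 2 <= (b w h).1].
Proof.
move=> active Hw w_case; have /forallP w_high := round_winner_highest Hw.
have [low | high] := ltP (b i h).1 (vhat / 2); last first.
  have same_bids j : deviation j h = b j h.
    have [->|/deviation_others //] := eqVneq j i.
    by rewrite deviation_active // ltNge high.
  have same_highest j : highest deviation h j = highest b h j.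
    by apply: eq_forallb => k; rewrite !same_bids.
  split; rewrite ?same_bids //; last by apply: le_trans high _; rewrite -!same_bids.
  apply: (round_winner_transfer Hw); first by rewrite -same_highest; apply/forallP.
  by move=> j; rewrite same_highest.
have w_ne_i : w != i by move: w_case; rewrite leNgt low orbF.
have dev_w := deviation_others h w_ne_i.
have dev_i : (deviation i h).1 = vhat / 2 by rewrite deviation_active // low.
have bid_w : vhat / 2 <= (b w h).1 by rewrite -dev_w -dev_i.
split=> //; apply: (round_winner_transfer Hw).
  apply/forallP => k; have [->|k_ne_i] := eqVneq k i.
    exact: ltW (lt_le_trans low bid_w).
  by rewrite -(deviation_others h k_ne_i) -dev_w.
move=> j /forallP j_high.
have j_ne_i : j != i.
  by apply: contraTneq (j_high w) => ->; rewrite -ltNge (lt_le_trans low bid_w).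
apply/forallP => k; rewrite (deviation_others h j_ne_i).
have [->|k_ne_i] := eqVneq k i; first by rewrite dev_i (le_trans bid_w).
by rewrite (deviation_others h k_ne_i).
Qed.

Lemma one_round h : ~~ gives_up h -> (units (step tb deviation h) < sstar S)%N ->
  step tb deviation h = step tb b h /\ (high_prices h -> high_prices (step tb b h)).
Proof.
move=> active short.
have [sold_out|unsold] := eqVneq (remaining h) set0; first by rewrite /step sold_out eqxx.
have [w Hw] := round_winner_exists deviation h i tb_valid.
have w_case : (w != i) || (vhat / 2 <= (b i h).1).
  apply/negPn/negP; rewrite negb_or negbK -ltNge => /andP[/eqP w_i low].
  move: short; rewrite /units (step_winner unsold Hw) won_rcons /= w_i eqxx.
  by rewrite deviation_active // low /= claim_completes // ltnn.
have [Hwb dev_w bid_w] := faithful_winner active Hw w_case.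
rewrite (step_winner unsold Hw) (step_winner unsold Hwb) dev_w; split=> // high.
by rewrite /high_prices all_rcons bid_w.
Qed.

Hypothesis never_completes : forall t, (units (run tb deviation t) < sstar S)%N.

Lemma runs_agree t : (forall u, (u < t)%N -> ~~ gives_up (run tb b u)) ->
  run tb deviation t = run tb b t /\ high_prices (run tb b t).
Proof.
elim: t => [//|t IH] active.
have [agree high] := IH (fun u lt_ut => active u (ltnW lt_ut)).
have short : (units (step tb deviation (run tb b t)) < sstar S)%N.
  by have := never_completes t.+1; rewrite /run iterS -/(run tb deviation t) agree.
have [agree' high'] := one_round (active t (ltnSn t)) short.
rewrite /run !iterS -/(run tb deviation t) -/(run tb b t) agree agree'.
by split=> //; apply: high'.
Qed.

Lemma stopping_round T : S \subset allocated (run tb b T) ->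
  exists t0, [/\ (t0 <= T)%N, forall u, (u < t0)%N -> ~~ gives_up (run tb b u)
    & (#|S| < #|allocated (run tb b t0) :&: S| + sstar S)%N].
Proof.
move=> sold.
have : exists u, (T <= u)%N || gives_up (run tb b u) by exists T; rewrite leqnn.
case/ex_minnP => t0 stop t0_min.
have le_t0T : (t0 <= T)%N by apply: t0_min; rewrite leqnn.
have active u : (u < t0)%N -> ~~ gives_up (run tb b u).
  move=> lt_ut0; apply/negP => stop_u.
  by have := t0_min u; rewrite stop_u orbT leqNgt lt_ut0 => /(_ isT).
exists t0; split=> //.
have card_split : #|S| =
    (#|allocated (run tb b t0) :&: S| + #|remaining (run tb b t0) :&: S|)%N.
  by rewrite -(cardsID (allocated (run tb b t0)) S) /remaining setDE !(setIC S).
case/orP: stop => [le_Tt0 | gave_up].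
  have -> : t0 = T by apply/eqP; rewrite eqn_leq le_t0T.
  rewrite (setIidPr sold) -[X in (X < _)%N]addn0 ltn_add2l.
  exact: leq_ltn_trans (leq0n _) (never_completes 0).
have [agree _] := runs_agree active.
have few_units : (units (run tb b t0) < sstar S)%N by rewrite -agree.
move: gave_up; rewrite /gives_up leqNgt few_units /= => few_left.
by rewrite card_split ltn_add2l (leq_trans few_left) ?leq_subr.
Qed.

End CoreDeviation.

Theorem mainTheorem9 (R : realFieldType) (n m : nat)
  (tb : tiebreak R n m) (b : profile R n m) (i : 'I_n)
  (S : {set 'I_m}) (vhat : R) :
  valid_tiebreak tb ->
  (forall j, valid_strategy (b j)) ->
  forall T : nat, S \subset allocated (run tb b T) ->
  (forall t : nat,
     (#|won i (run tb (upd b i (core_deviation S vhat (b i) i)) t) :&: S|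
        < sstar S)%N) ->
  vhat / 2 <= nth 0 (sorted_prices (run tb b T) S) (sstar S).-1.
Proof.
move=> tb_valid _ T sold never_completes.
have [t0 [le_t0T active few_left]] := stopping_round tb_valid never_completes sold.
have [_ high] := runs_agree tb_valid never_completes active.
have [h' extends] := run_extends tb b le_t0T.
apply: (nth_sorted_values_ge (A := allocated (run tb b t0) :&: S)) => //.
- exact: subsetIr.
- move=> x /setIP[x_sold _]; rewrite extends.
  by have [a a_in ->] := price_prefix h' x_sold; apply: (allP high).
- rewrite (leq_ltn_trans (leq0n _) (never_completes 0)) /=.
  by rewrite /sstar leq_uphalf_double -addnn leq_addr.
Qed.
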